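(* Let $n,m,c\ge 1$, let $P=(V_P,E_P)$ be a graph, let $S\subseteq V_P$, and let $\phi: V_P\to\mathcal P(V(T(n,m,c)))$ be a feasible embedding of $P[S]$ into the Chimera graph $T(n,m,c)$. Define $\phi^\dagger: V_P\to\mathcal P(V(T(2n,2m,c)))$ by $$\phi^\dagger(v)=\bigcup_{(x,y,z)\in\phi(v)} \sigma(x,y,z),$$ where $\sigma(x,y,z)=\{(2x,2y,z),(2x+1,2y,z)\}$ if $0\le z\le c-1$, and $\sigma(x,y,z)=\{(2x,2y,z),(2x,2y+1,z)\}$ if $c\le z\le 2c-1$. Then $\phi^\dagger$ is a feasible embedding of $P[S]$ into $T(2n,2m,c)$.
   Context: Chimera graph $T(n,m,c)$: an $n\times m$ grid of unit cells, each a complete bipartite graph $K_{c,c}$. Its vertices are triples $(x,y,z)$ with $x\in\{0,\dots,n-1\}$ (row index), $y\in\{0,\dots,m-1\}$ (column index), $z\in\{0,\dots,2c-1\}$; vertices with $z\le c-1$ form the left partite set and those with $z\ge c$ the right partite set of cell $(x,y)$. Edges: $(x,y,z)\sim(x,y,z')$ whenever $z\le c-1<z'$ (the $K_{c,c}$ inside a cell); $(x,y,z)\sim(x+1,y,z)$ for $z\le c-1$ and $x+1\le n-1$ (left-partite vertices connect to the corresponding vertex in the adjacent cell of the same column); $(x,y,z)\sim(x,y+1,z)$ for $z\ge c$ and $y+1\le m-1$ (right-partite vertices connect to the corresponding vertex in the adjacent cell of the same row). For $S\subseteq V_P$, $P[S]$ is the subgraph of $P$ induced on $S$. A map $\phi: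 V_P\to\mathcal P(V_H)$ into a hardware graph $H$ is a feasible embedding of $P[S]$ into $H$ if: $\phi(v)=\emptyset$ for $v\notin S$ and $\phi(v)\neq\emptyset$ for $v\in S$; the sets (chains) $\phi(v)$, $v\in V_P$, are pairwise disjoint; each chain $\phi(v)$ induces a connected subgraph of $H$; and for every edge $(u,v)\in E_P$ with $u,v\in S$ there exist $a\in\phi(u)$, $b\in\phi(v)$ with $(a,b)$ an edge of $H$. *)

From mathcomp Require Import all_boot.
Set Implicit Arguments. Unset Strict Implicit. Unset Printing Implicit Defensive.

Definition chim_vertex (n m c : nat) : finType := ('I_n * 'I_m * 'I_(c + c))%type.

Definition cx n m c (v : chim_vertex n m c) : nat := v.1.1.
Definition cy n m c (v : chim_vertex n m c) : nat := v.1.2.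
Definition cz n m c (v : chim_vertex n m c) : nat := v.2.

Definition chim_step n m c (u w : chim_vertex n m c) : bool :=
  [|| [&& cx u == cx w, cy u == cy w, cz u < c & c <= cz w],
      [&& (cx u).+1 == cx w, cy u == cy w, cz u == cz w & cz u < c]
    | [&& cx u == cx w, (cy u).+1 == cy w, cz u == cz w & c <= cz u]].

Definition chim_adj n m c : rel (chim_vertex n m c) :=
  fun u w => chim_step u w || chim_step w u.

Definition feasible_embedding (V : finType) (E : rel V) (S : {set V})
    (HV : finType) (adjH : rel HV) (phi : V -> {set HV}) : Prop :=
  [/\ (forall v, v \notin S -> phi v = set0),
      (forall v, v \in S -> phi v != set0),
      (forall u v, u != v -> [disjoint phi u & phi v]),
      (forall v, {in phi v &, forall a b,
          connect [rel a' b' | [&& adjH a' b', a' \in phi v & b' \in phi v]] a b})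
    & (forall u v, u \in S -> v \in S -> E u v ->
          exists a b, [/\ a \in phi u, b \in phi v & adjH a b])].

Definition sigma_rel n m c (u : chim_vertex n m c)
    (w : chim_vertex (2 * n) (2 * m) c) : bool :=
  (cz w == cz u) &&
  (if cz u <= c - 1
   then ((cx w == 2 * cx u) || (cx w == 2 * cx u + 1)) && (cy w == 2 * cy u)
   else (cx w == 2 * cx u) && ((cy w == 2 * cy u) || (cy w == 2 * cy u + 1))).

Definition phi_dagger n m c (V : finType) (phi : V -> {set chim_vertex n m c})
    (v : V) : {set chim_vertex (2 * n) (2 * m) c} :=
  [set w | [exists u in phi v, sigma_rel u w]].

From mathcomp Require Import all_boot.
From mathcomp Require Import zify.
Set Implicit Arguments. Unset Strict Implicit. Unset Printing Implicit Defensive.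

(* Every vertex u = (x,y,z) of T(n,m,c) is replaced by the two
   vertices of sigma(u): its "base" (2x,2y,z) and its "twin", which is
   (2x+1,2y,z) for a left vertex (z < c) and (2x,2y+1,z) for a right one.
   The proof rests on three local facts about sigma:
   - sigma(u) determines u (halve the coordinates), so disjoint chains stay
     disjoint and empty chains stay empty;
   - base and twin of u are adjacent, so each sigma(u) is connected;
   - an edge u ~ u' of T(n,m,c) lifts to an edge between sigma(u) and
     sigma(u'): in the direction of the edge the twin of u, otherwise the
     base of u, is adjacent to the base of u'. *)

Lemma connect_map (T T' : finType) (e : rel T) (e' : rel T') (f : T -> T') :
  (forall a b, e a b -> connect e' (f a) (f b)) ->
  forall a b, connect e a b -> connect e' (f a) (f b).
Proof.
move=> step a b /connectP [p e_p ->]; elim: p a e_p => [|x p IHp] a /=.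
  by rewrite connect0.
by case/andP=> /step e_ax /IHp; apply: connect_trans.
Qed.

Definition induced_rel {T : finType} (e : rel T) (A : {set T}) : rel T :=
  [rel a b | [&& e a b, a \in A & b \in A]].

Lemma induced_rel_sym (T : finType) (e : rel T) (A : {set T}) :
  symmetric e -> symmetric (induced_rel e A).
Proof. by move=> e_sym a b; rewrite /induced_rel /= e_sym; congr (_ && _); exact: andbC. Qed.

Lemma chim_adj_sym n m c : symmetric (@chim_adj n m c).
Proof. by move=> u w; rewrite /chim_adj orbC. Qed.

Lemma double_lt {k} (x : 'I_k) : 2 * x < 2 * k.
Proof. have := ltn_ord x; lia. Qed.

Lemma double_add1_lt {k} (x : 'I_k) : 2 * x + 1 < 2 * k.
Proof. have := ltn_ord x; lia. Qed.

Section Blowup.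
Variables n m c : nat.
Hypothesis c_gt0 : 0 < c.

Local Notation small := (chim_vertex n m c).
Local Notation big := (chim_vertex (2 * n) (2 * m) c).

Definition sigma_base (u : small) : big :=
  (Ordinal (double_lt u.1.1), Ordinal (double_lt u.1.2), u.2).

Definition sigma_twin (u : small) : big :=
  if cz u < c then (Ordinal (double_add1_lt u.1.1), Ordinal (double_lt u.1.2), u.2)
  else (Ordinal (double_lt u.1.1), Ordinal (double_add1_lt u.1.2), u.2).

(* Since c > 0, the side test z <= c - 1 of sigma is just z < c. *)
Lemma sigma_relE (u : small) (w : big) :
  sigma_rel u w = (cz w == cz u) &&
    (if cz u < c then ((cx w == 2 * cx u) || (cx w == 2 * cx u + 1)) && (cy w == 2 * cy u)
     else (cx w == 2 * cx u) && ((cy w == 2 * cy u) || (cy w == 2 * cy u + 1))).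
Proof. by rewrite /sigma_rel (_ : (cz u <= c - 1) = (cz u < c)) //; lia. Qed.

(* sigma(u) determines u: halving recovers its coordinates. *)
Lemma sigma_rel_inj (u u' : small) (w : big) :
  sigma_rel u w -> sigma_rel u' w -> u = u'.
Proof.
case: u u' w => [[x y] z] [[x' y'] z'] [[a b] d].
rewrite !sigma_relE /cx /cy /cz /= => sw sw'.
have ex : x = x' by apply: ord_inj; case: ifP sw; case: ifP sw' => _ + _; lia.
have ey : y = y' by apply: ord_inj; case: ifP sw; case: ifP sw' => _ + _; lia.
have ez : z = z' by apply: ord_inj; lia.
by rewrite ex ey ez.
Qed.

Lemma sigma_rel_base (u : small) : sigma_rel u (sigma_base u).
Proof. case: u => [[x y] z]; rewrite sigma_relE /cx /cy /cz /=; case: ifP; lia. Qed.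

Lemma sigma_rel_twin (u : small) : sigma_rel u (sigma_twin u).
Proof.
case: u => [[x y] z]; rewrite sigma_relE /sigma_twin /cx /cy /cz /=.
by case: ltnP => /=; lia.
Qed.

Lemma sigma_rel_cases (u : small) (w : big) :
  sigma_rel u w -> w = sigma_base u \/ w = sigma_twin u.
Proof.
case: u w => [[x y] z] [[a b] d]; rewrite sigma_relE /sigma_twin /sigma_base.
rewrite /cx /cy /cz /=; case: ifP => _ sw.
- have [ea|ea] : (a : nat) = 2 * x \/ (a : nat) = 2 * x + 1 by lia.
  + by left; congr (_, _, _); apply: ord_inj => /=; lia.
  + by right; congr (_, _, _); apply: ord_inj => /=; lia.
- have [eb|eb] : (b : nat) = 2 * y \/ (b : nat) = 2 * y + 1 by lia.
  + by left; congr (_, _, _); apply: ord_inj => /=; lia.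
  + by right; congr (_, _, _); apply: ord_inj => /=; lia.
Qed.

(* The two elements of sigma(u) are adjacent: the twin lies in the cell next
   to the base along the coupler direction of u (a column step for a left
   vertex, a row step for a right one), with the same index z. *)
Lemma adj_base_twin (u : small) : chim_adj (sigma_base u) (sigma_twin u).
Proof.
case: u => [[x y] z]; rewrite /chim_adj /chim_step /sigma_base /sigma_twin.
by rewrite /cx /cy /cz /=; case: ltnP => /=; lia.
Qed.

Lemma step_lift (u u' : small) : chim_step u u' ->
  chim_adj (sigma_base u) (sigma_base u') \/ chim_adj (sigma_twin u) (sigma_base u').
Proof.
case: u u' => [[x y] z] [[x' y'] z'].
rewrite /chim_adj /chim_step /sigma_base /sigma_twin /cx /cy /cz /=.
case/or3P=> [/and4P [ex ey z_c c_z']|/and4P [ex ey ez z_c]|/and4P [ex ey ez c_z]].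
- by left; apply/orP; left; apply/orP; left; lia.
- by right; rewrite z_c /=; apply/orP; left; apply/or3P; constructor 2; lia.
- by right; rewrite ltnNge c_z /=; apply/orP; left; apply/or3P; constructor 3; lia.
Qed.

Lemma adj_lift (u u' : small) : chim_adj u u' ->
  exists a b, [/\ sigma_rel u a, sigma_rel u' b & chim_adj a b].
Proof.
case/orP=> /step_lift [adj|adj].
- by exists (sigma_base u), (sigma_base u'); rewrite !sigma_rel_base.
- by exists (sigma_twin u), (sigma_base u'); rewrite sigma_rel_twin sigma_rel_base.
- exists (sigma_base u), (sigma_base u').
  by rewrite !sigma_rel_base chim_adj_sym.
- exists (sigma_base u), (sigma_twin u').
  by rewrite sigma_rel_base sigma_rel_twin chim_adj_sym.
Qed.

Variables (V : finType) (phi : V -> {set small}).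

Lemma phi_daggerP (v : V) (w : big) :
  reflect (exists2 u, u \in phi v & sigma_rel u w) (w \in phi_dagger phi v).
Proof.
rewrite inE; apply: (iffP existsP) => [[u /andP [] ]|[u pu su]]; first by exists u.
by exists u; rewrite pu.
Qed.

Lemma mem_phi_dagger (v : V) (u : small) (w : big) :
  u \in phi v -> sigma_rel u w -> w \in phi_dagger phi v.
Proof. by move=> pu su; apply/phi_daggerP; exists u. Qed.

Lemma phi_dagger_set0 (v : V) : phi v = set0 -> phi_dagger phi v = set0.
Proof.
move=> phi0; apply/setP => w; rewrite [RHS]inE.
by apply/negbTE/phi_daggerP => -[u]; rewrite phi0 inE.
Qed.

Lemma phi_dagger_neq0 (v : V) : phi v != set0 -> phi_dagger phi v != set0.
Proof.
case/set0Pn=> u pu; apply/set0Pn; exists (sigma_base u).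
exact: mem_phi_dagger pu (sigma_rel_base u).
Qed.

Lemma phi_dagger_disjoint (v v' : V) :
  [disjoint phi v & phi v'] -> [disjoint phi_dagger phi v & phi_dagger phi v'].
Proof.
move=> dis; apply/pred0P => w /=; apply/negbTE/andP.
case=> /phi_daggerP [u pu su] /phi_daggerP [u' pu' su'].
by move: pu; rewrite (sigma_rel_inj su su') => /(disjointFr dis); rewrite pu'.
Qed.

Section Chain.
Variable v : V.

Local Notation chain := (induced_rel (@chim_adj n m c) (phi v)).
Local Notation chain_dagger :=
  (induced_rel (@chim_adj (2 * n) (2 * m) c) (phi_dagger phi v)).

Lemma connect_chain_dagger_sym : connect_sym chain_dagger.
Proof. exact/sym_connect_sym/induced_rel_sym/chim_adj_sym. Qed.

Lemma connect_base (u : small) (w : big) :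
  u \in phi v -> sigma_rel u w -> connect chain_dagger (sigma_base u) w.
Proof.
move=> pu /sigma_rel_cases [->|->]; first exact: connect0.
apply: connect1; rewrite /induced_rel /= adj_base_twin.
by rewrite (mem_phi_dagger pu (sigma_rel_base u)) (mem_phi_dagger pu (sigma_rel_twin u)).
Qed.

Lemma connect_base_step (u u' : small) :
  chain u u' -> connect chain_dagger (sigma_base u) (sigma_base u').
Proof.
case/and3P=> /adj_lift [a [b [sa sb adj]]] pu pu'.
apply: connect_trans (connect_base pu sa) _.
rewrite connect_chain_dagger_sym; apply: connect_trans (connect_base pu' sb) _.
apply: connect1; rewrite /induced_rel /= chim_adj_sym adj.
by rewrite (mem_phi_dagger pu sa) (mem_phi_dagger pu' sb).
Qed.

Lemma phi_dagger_connected :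
  {in phi v &, forall a b, connect chain a b} ->
  {in phi_dagger phi v &, forall a b, connect chain_dagger a b}.
Proof.
move=> conn a b /phi_daggerP [u pu sa] /phi_daggerP [u' pu' sb].
apply: connect_trans (connect_trans _ (connect_base pu' sb)).
  by rewrite connect_chain_dagger_sym; apply: connect_base pu sa.
exact: connect_map connect_base_step _ _ (conn u u' pu pu').
Qed.

End Chain.

Lemma phi_dagger_edge (v v' : V) :
  (exists a b, [/\ a \in phi v, b \in phi v' & chim_adj a b]) ->
  exists a b, [/\ a \in phi_dagger phi v, b \in phi_dagger phi v' & chim_adj a b].
Proof.
case=> [u [u' [pu pu' /adj_lift [a [b [sa sb adj]]]]]].
by exists a, b; split; [exact: mem_phi_dagger pu sa|exact: mem_phi_dagger pu' sb|].
Qed.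

End Blowup.

Theorem mainTheorem1 (n m c : nat) (V : finType) (E : rel V)
    (S : {set V}) (phi : V -> {set chim_vertex n m c}) :
  0 < n -> 0 < m -> 0 < c ->
  feasible_embedding E S (@chim_adj n m c) phi ->
  feasible_embedding E S (@chim_adj (2 * n) (2 * m) c) (phi_dagger phi).
Proof.
move=> _ _ c_gt0 [empty nonempty disjoint connected edges]; split.
- by move=> v /empty /phi_dagger_set0.
- by move=> v /nonempty /(phi_dagger_neq0 c_gt0).
- by move=> u v /disjoint /(phi_dagger_disjoint c_gt0).
- move=> v; exact: (phi_dagger_connected c_gt0 (connected v)).
- by move=> u v Su Sv /(edges u v Su Sv) /(phi_dagger_edge c_gt0).
Qed.
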